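(* Let $w\in W$ and $\gamma\in\mathrm{maxinv}(w)$. Then $w\to s_\gamma w$ is a quantum edge of $\mathrm{QB}(W)$; that is, writing $s_\gamma w=ws_{\beta}$ with $\beta=-w^{-1}\gamma\in\Phi^+$, we have $\ell(ws_\beta)=\ell(w)+1-\langle\beta^\vee,2\rho\rangle$.
   Context: $\Phi$ is a reduced crystallographic finite root system with fixed basis $\Delta$, positive roots $\Phi^+$, negative roots $\Phi^-=-\Phi^+$, Weyl group $W$ with Coxeter length $\ell$, and $2\rho=\sum_{\beta\in\Phi^+}\beta$. For roots $\gamma,\alpha$ write $\gamma\le\alpha$ if $\alpha-\gamma$ is a $\mathbb Z_{\ge0}$-combination of positive roots. For $w\in W$: $\mathrm{inv}(w)=\{\alpha\in\Phi^+:w^{-1}\alpha\in\Phi^-\}$, and $\gamma\in\mathrm{inv}(w)$ is a maximal inversion, $\gamma\in\mathrm{maxinv}(w)$, if there is no $\alpha\in\mathrm{inv}(w)$ with $\alpha\ne\gamma$ and $\gamma\le\alpha$. The quantum Bruhat graph $\mathrm{QB}(W)$ has vertex set $W$ and an edge $u\to us_\beta$ ($\beta\in\Phi^+$) if $\ell(us_\beta)=\ell(u)+1$ (Bruhat edge) or $\ell(us_\beta)=\ell(u)+1-\langle\beta^\vee,2\rho\rangle$ (quantum edge). *)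

From HB Require Import structures.
From mathcomp Require Import all_boot all_order all_algebra.
From mathcomp Require Import boolp.
Set Implicit Arguments. Unset Strict Implicit. Unset Printing Implicit Defensive.
Import Order.TTheory GRing.Theory Num.Theory.
Local Open Scope ring_scope.

Section RootSystems.
Variables (R : realFieldType) (n : nat).
Notation V := 'cV[R]_n.

Definition dot (u v : V) : R := (u^T *m v) 0 0.

(* reflection s_a as a matrix: s_a v = v - (2 (v,a)/(a,a)) a *)
Definition refl (a : V) : 'M[R]_n :=
  1%:M - (2 / dot a a) *: (a *m a^T).

(* <b, a^vee> = 2 (b,a)/(a,a) *)
Definition cartan (b a : V) : R := 2 * dot b a / dot a a.

Definition is_root_system (Phi : seq V) : Prop :=
  [/\ uniq Phi /\ (0 : V) \notin Phi,
      (forall a, a \in Phi -> - a \in Phi),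
      (forall a (c : R), a \in Phi -> c *: a \in Phi -> c = 1 \/ c = -1),
      (forall a b, a \in Phi -> b \in Phi -> refl a *m b \in Phi) &
      (forall a b, a \in Phi -> b \in Phi -> exists z : int, cartan b a = z%:~R)].

Definition positive (Phi Delta : seq V) (b : V) : Prop :=
  b \in Phi /\ exists c : 'I_(size Delta) -> nat,
      b = \sum_(i < size Delta) (c i)%:R *: Delta`_i.

Definition negative (Phi Delta : seq V) (b : V) : Prop := positive Phi Delta (- b).

Definition is_basis (Phi Delta : seq V) : Prop :=
  [/\ {subset Delta <= Phi},
      (forall c : 'I_(size Delta) -> R,
          \sum_(i < size Delta) c i *: Delta`_i = 0 -> forall i, c i = 0) &
      (forall b, b \in Phi -> positive Phi Delta b \/ negative Phi Delta b)].

Definition in_W (Phi : seq V) (w : 'M[R]_n) : Prop :=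
  exists s : seq V, {subset s <= Phi} /\ w = foldr (fun a m => refl a *m m) 1%:M s.

Definition word_prod (Delta : seq V) (s : seq 'I_(size Delta)) : 'M[R]_n :=
  foldr (fun (i : 'I_(size Delta)) m => refl Delta`_i *m m) 1%:M s.

Definition length_is (Delta : seq V) (w : 'M[R]_n) (k : nat) : Prop :=
  (exists s : seq 'I_(size Delta), size s = k /\ word_prod s = w) /\
  (forall s : seq 'I_(size Delta), word_prod s = w -> (k <= size s)%N).

Definition two_rho (Phi Delta : seq V) : V :=
  \sum_(b <- Phi | `[< positive Phi Delta b >]) b.

Definition root_le (Phi Delta : seq V) (g a : V) : Prop :=
  exists s : seq V, (forall b, b \in s -> positive Phi Delta b) /\
                    a - g = \sum_(b <- s) b.

Definition inv_set (Phi Delta : seq V) (w : 'M[R]_n) (a : V) : Prop :=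
  positive Phi Delta a /\ negative Phi Delta (invmx w *m a).

Definition maxinv (Phi Delta : seq V) (w : 'M[R]_n) (g : V) : Prop :=
  inv_set Phi Delta w g /\
  ~ exists a, [/\ inv_set Phi Delta w a, a <> g & root_le Phi Delta g a].

End RootSystems.

From HB Require Import structures.
From mathcomp Require Import all_boot all_order all_algebra.
From mathcomp Require Import boolp.
From mathcomp Require Import ring lra zify.
Import Order.TTheory GRing.Theory Num.Theory.
Local Open Scope ring_scope.

(* Put [u = w^-1] and [b = - u g], so that [w s_b = s_g w].  The Coxeter
   length of [x] is its number of inversions (exchange property), and every
   reflection lies in [W] because every positive root is [W]-conjugate to a
   simple one.  Counting inversions root by root, the claim becomes
   [ninv (u s_g) - ninv u + <2 rho, b^vee> = 1], a sum over the roots [c],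
   grouped with [- c].  The pair of [g] contributes 1; the pairs with [s_g c]
   positive cancel under [c |-> s_g c], and those with [s_g c] negative cancel
   under [c |-> - s_g c].  Maximality of [g] is what makes the signs match: an
   inversion [c <> g] with [c - g] a sum of positive roots would be larger
   than [g]; in particular it forces [<c, g^vee> = 1] whenever [c] and
   [- s_g c] are both inversions. *)

Set Implicit Arguments. Unset Strict Implicit. Unset Printing Implicit Defensive.

Section EuclideanSpace.
Variables (R : realFieldType) (n : nat).
Notation V := 'cV[R]_n.
Notation M := 'M[R]_n.
Implicit Types (u v a : V) (A B : M).

Lemma mulmx_ext A B : (forall v : V, A *m v = B *m v) -> A = B.
Proof.
move=> eqAB; apply/matrixP=> i j.
have := congr1 (fun X : V => X i 0) (eqAB (delta_mx j 0)).
by rewrite -!colE !mxE.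
Qed.

Lemma dotC u v : dot u v = dot v u.
Proof. by rewrite /dot -[in RHS](trmxK u) -trmx_mul [in RHS]mxE. Qed.

Lemma dotDl u v a : dot (u + v) a = dot u a + dot v a.
Proof. by rewrite /dot linearD /= mulmxDl mxE. Qed.

Lemma dotNl u a : dot (- u) a = - dot u a.
Proof. by rewrite /dot linearN /= mulNmx mxE. Qed.

Lemma dotBl u v a : dot (u - v) a = dot u a - dot v a.
Proof. by rewrite dotDl dotNl. Qed.

Lemma dotZl (c : R) u a : dot (c *: u) a = c * dot u a.
Proof. by rewrite /dot linearZ /= -scalemxAl mxE. Qed.

Lemma dot0l a : dot 0 a = 0.
Proof. by rewrite /dot linear0 mul0mx mxE. Qed.

Lemma dotNr u a : dot a (- u) = - dot a u.
Proof. by rewrite !(dotC a) dotNl. Qed.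

Lemma dotBr u v a : dot a (u - v) = dot a u - dot a v.
Proof. by rewrite !(dotC a) dotBl. Qed.

Lemma dotZr (c : R) u a : dot a (c *: u) = c * dot a u.
Proof. by rewrite !(dotC a) dotZl. Qed.

Lemma dot_suml (I : Type) (r : seq I) (P : pred I) (F : I -> V) a :
  dot (\sum_(i <- r | P i) F i) a = \sum_(i <- r | P i) dot (F i) a.
Proof.
elim: r => [|x r IHr]; first by rewrite !big_nil dot0l.
by rewrite !big_cons; case: (P x); rewrite ?dotDl IHr.
Qed.

Lemma dot_mulmxl A u v : dot (A *m u) v = dot u (A^T *m v).
Proof. by rewrite /dot trmx_mul mulmxA. Qed.

Lemma dot_self v : dot v v = \sum_i v i 0 ^+ 2.
Proof. by rewrite /dot mxE; apply: eq_bigr => i _; rewrite mxE expr2. Qed.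

Lemma dot_ge0 v : 0 <= dot v v.
Proof. by rewrite dot_self sumr_ge0 // => i _; rewrite sqr_ge0. Qed.

Lemma dot_eq0 v : (dot v v == 0) = (v == 0).
Proof.
apply/idP/idP => [|/eqP->]; last by rewrite dot0l.
rewrite dot_self => /eqP v2_eq0; apply/eqP/matrixP=> i j.
rewrite (ord1 j) mxE; apply/eqP; rewrite -sqrf_eq0; apply/eqP.
by apply: (psumr_eq0P _ v2_eq0) => // k _; rewrite sqr_ge0.
Qed.

Lemma dot_gt0 v : v != 0 -> 0 < dot v v.
Proof. by move=> v_neq0; rewrite lt_def dot_eq0 v_neq0 dot_ge0. Qed.

(* The Gram determinant is the squared norm of [dot v v *: u - dot u v *: v]
   divided by [dot v v]. *)
Lemma cauchy_schwarz_lt u v : v != 0 -> (forall c : R, u != c *: v) ->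
  dot u v ^+ 2 < dot u u * dot v v.
Proof.
move=> v_neq0 u_nprop; set q := dot v v; set x := dot u v.
have q_gt0 : 0 < q by exact: dot_gt0.
have z_neq0 : q *: u - x *: v != 0.
  apply: contra (u_nprop (x / q)) => /eqP /subr0_eq qu_eq.
  by rewrite mulrC -scalerA -qu_eq scalerA mulVf ?scale1r // gt_eqF.
have := dot_gt0 z_neq0.
rewrite !(dotBl, dotBr, dotZl, dotZr) (dotC v u) -/x -/q => z2_gt0.
have : 0 < q * (q * dot u u - x ^+ 2) by nra.
by rewrite pmulr_rgt0 // subr_gt0 mulrC.
Qed.

Lemma cartanBl u v a : cartan (u - v) a = cartan u a - cartan v a.
Proof. by rewrite /cartan dotBl; ring. Qed.

Lemma cartanZl (c : R) u a : cartan (c *: u) a = c * cartan u a.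
Proof. by rewrite /cartan dotZl; ring. Qed.

Lemma cartanNl u a : cartan (- u) a = - cartan u a.
Proof. by rewrite -scaleN1r cartanZl mulN1r. Qed.

Lemma cartanNr u a : cartan u (- a) = - cartan u a.
Proof. by rewrite /cartan dotNr dotNl dotNr opprK; ring. Qed.

Lemma cartan_self a : a != 0 -> cartan a a = 2.
Proof. by move=> a_neq0; have := dot_gt0 a_neq0; rewrite /cartan => ?; field; lra. Qed.

Lemma reflE a v : refl a *m v = v - cartan v a *: a.
Proof.
rewrite /refl mulmxBl mul1mx -scalemxAl -mulmxA.
rewrite [a^T *m v]mx11_scalar mul_mx_scalar scalerA.
by congr (_ - _ *: _); rewrite /cartan -/(dot a v) dotC mulrAC.
Qed.

Lemma refl_self a : a != 0 -> refl a *m a = - a.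
Proof.
by move=> a_neq0; rewrite reflE cartan_self // scaler_nat mulr2n opprD addrA subrr sub0r.
Qed.

Lemma cartan_refll a v : a != 0 -> cartan (refl a *m v) a = - cartan v a.
Proof. by move=> a_neq0; rewrite reflE cartanBl cartanZl cartan_self //; ring. Qed.

Lemma reflK a v : a != 0 -> refl a *m (refl a *m v) = v.
Proof.
move=> a_neq0; rewrite [refl a *m (_ *m v)]reflE cartan_refll //.
by rewrite scaleNr opprK reflE subrK.
Qed.

Lemma refl_mulmxK a : a != 0 -> refl a *m refl a = 1%:M.
Proof. by move=> a_neq0; apply: mulmx_ext => v; rewrite -mulmxA reflK // mul1mx. Qed.

Lemma trmx_refl a : (refl a)^T = refl a.
Proof. by rewrite /refl linearB /= linearZ /= trmx1 trmx_mul trmxK. Qed.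

Lemma reflN a : refl (- a) = refl a.
Proof. by apply: mulmx_ext => v; rewrite !reflE cartanNr scaleNr scalerN opprK. Qed.

Definition orthomx A := A^T *m A = 1%:M.

Lemma orthomxC A : orthomx A -> A *m A^T = 1%:M.
Proof. exact: mulmx1C. Qed.

Lemma orthomx_dot A u v : orthomx A -> dot (A *m u) (A *m v) = dot u v.
Proof. by move=> oA; rewrite dot_mulmxl mulmxA oA mul1mx. Qed.

Lemma orthomxM A B : orthomx A -> orthomx B -> orthomx (A *m B).
Proof.
by rewrite /orthomx trmx_mul => oA oB; rewrite mulmxA -(mulmxA B^T) oA mulmx1 oB.
Qed.

Lemma orthomx_tr A : orthomx A -> orthomx A^T.
Proof. by move=> oA; rewrite /orthomx trmxK orthomxC. Qed.

Lemma orthomx_refl a : a != 0 -> orthomx (refl a).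
Proof. by move=> a_neq0; rewrite /orthomx trmx_refl refl_mulmxK. Qed.

Lemma orthomx_invmx A : orthomx A -> invmx A = A^T.
Proof.
move=> oA; have [A_unit _] := mulmx1_unit (orthomxC oA).
by rewrite -[invmx A]mul1mx -oA -mulmxA mulmxV // mulmx1.
Qed.

Lemma refl_conj A a : orthomx A -> A *m refl a *m A^T = refl (A *m a).
Proof.
move=> oA; apply: mulmx_ext => v.
rewrite -!mulmxA reflE mulmxBr mulmxA orthomxC // mul1mx -scalemxAr reflE.
by congr (_ - _ *: _); rewrite /cartan dot_mulmxl trmxK -(orthomx_dot a a oA).
Qed.

Lemma refl_mulmx_orthomx A a : orthomx A -> refl a *m A = A *m refl (A^T *m a).
Proof.
by move=> oA; rewrite -(refl_conj a (orthomx_tr oA)) trmxK !mulmxA (orthomxC oA) mul1mx.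
Qed.

End EuclideanSpace.

Lemma big_bij_in (T : eqType) (A : Type) (idx : A) (op : Monoid.com_law idx)
    (s : seq T) (F : T -> A) (f g : T -> T) : uniq s ->
  {in s, forall x, f x \in s} -> {in s, forall x, g x \in s} ->
  {in s, cancel f g} -> {in s, cancel g f} ->
  \big[op/idx]_(x <- s) F (f x) = \big[op/idx]_(x <- s) F x.
Proof.
move=> s_uniq sf sg fK gK; rewrite -(big_map f xpredT); apply: perm_big.
apply: uniq_perm => //.
  by rewrite map_inj_in_uniq // => x y sx sy eq_f; rewrite -(fK x sx) eq_f fK.
move=> x; apply/mapP/idP => [[y sy ->]|sx]; first exact: sf.
by exists (g x); rewrite ?sg ?gK.
Qed.

Lemma big_uniq_delta (T : eqType) (A : Type) (idx : A) (op : Monoid.com_law idx)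
    (s : seq T) (F : T -> A) b : uniq s -> b \in s ->
  (forall a, a != b -> F a = idx) -> \big[op/idx]_(a <- s) F a = F b.
Proof.
move=> s_uniq sb F_supp.
by rewrite (bigD1_seq b sb s_uniq) /= big1 ?Monoid.mulm1.
Qed.

Section RootSystem.
Variables (R : realFieldType) (n : nat) (Phi Delta : seq 'cV[R]_n).
Hypothesis rootPhi : is_root_system Phi.
Hypothesis basisDelta : is_basis Phi Delta.
Notation V := 'cV[R]_n.
Notation M := 'M[R]_n.
Notation I := 'I_(size Delta).
Notation pos := (positive Phi Delta).
Notation neg := (negative Phi Delta).
Notation D i := (Delta`_i).
Implicit Types (a b c v : V) (x y : M).

Lemma Phi_uniq : uniq Phi. Proof. by case: rootPhi => -[]. Qed.
Lemma Phi_neq0 a : a \in Phi -> a != 0.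
Proof. by case: rootPhi => -[_ Phi0] _ _ _ _ aPhi; apply: contraNneq Phi0 => <-. Qed.
Lemma PhiN a : a \in Phi -> - a \in Phi. Proof. by case: rootPhi => _ PhiN _ _ _; apply: PhiN. Qed.
Lemma Phi_reduced a (c : R) : a \in Phi -> c *: a \in Phi -> c = 1 \/ c = -1.
Proof. by case: rootPhi => _ _ Phi_red _ _; apply: Phi_red. Qed.
Lemma Phi_refl a b : a \in Phi -> b \in Phi -> refl a *m b \in Phi.
Proof. by case: rootPhi => _ _ _ Phi_refl _; apply: Phi_refl. Qed.
Lemma Phi_cartan_int a b : a \in Phi -> b \in Phi -> exists z : int, cartan b a = z%:~R.
Proof. by case: rootPhi => _ _ _ _ Phi_int; apply: Phi_int. Qed.

Lemma Delta_Phi (i : I) : D i \in Phi.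
Proof. by move: basisDelta => [sub _ _]; apply: sub; rewrite mem_nth. Qed.
Lemma Delta_neq0 (i : I) : D i != 0. Proof. exact: Phi_neq0 (Delta_Phi i). Qed.
Lemma Delta_free (c : I -> R) : \sum_i c i *: D i = 0 -> forall i, c i = 0.
Proof. by move: basisDelta => [_ free _]; apply: free. Qed.
Lemma Phi_pos_or_neg a : a \in Phi -> pos a \/ neg a.
Proof. by move: basisDelta => [_ _ sign]; apply: sign. Qed.

Lemma Delta_coord_uniq (c d : I -> R) :
  \sum_i c i *: D i = \sum_i d i *: D i -> forall i, c i = d i.
Proof.
move=> eq_cd i; apply/eqP; rewrite -subr_eq0; apply/eqP; move: i.
apply: Delta_free; under eq_bigr do rewrite scalerBl.
by rewrite sumrB eq_cd subrr.
Qed.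

Lemma sum_Delta_delta (i : I) (t : R) : \sum_j (if j == i then t else 0) *: D j = t *: D i.
Proof. by rewrite (bigD1 i) //= eqxx big1 ?addr0 // => j /negbTE ->; rewrite scale0r. Qed.

Lemma Phi_nonproportional a b : a \in Phi -> b \in Phi -> a != b -> a != - b ->
  forall c : R, a != c *: b.
Proof.
move=> aPhi bPhi neq_ab neq_aNb c; apply/eqP => a_eq.
move: aPhi neq_ab neq_aNb; rewrite a_eq => /(Phi_reduced bPhi) [] ->.
  by rewrite scale1r eqxx.
by rewrite scaleN1r eqxx.
Qed.

(* By Cauchy-Schwarz [<b, a^vee> <a, b^vee> < 4], so [<a, b^vee> = 1] and
   [s_b a = a - b]. *)
Lemma Phi_subr a b : a \in Phi -> b \in Phi -> b != a -> b != - a ->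
  2 <= cartan b a -> b - a \in Phi.
Proof.
move=> aPhi bPhi neq_ba neq_bNa cba_ge2.
have cs := cauchy_schwarz_lt (Phi_neq0 aPhi) (Phi_nonproportional bPhi aPhi neq_ba neq_bNa).
set p := dot b b in cs; set q := dot a a in cs; set x := dot b a in cs.
have q_gt0 : 0 < q by exact/dot_gt0/Phi_neq0.
have p_gt0 : 0 < p by exact/dot_gt0/Phi_neq0.
have cba_q : cartan b a * q = 2 * x by rewrite /cartan -/x -/q mulfVK // gt_eqF.
have cab_p : cartan a b * p = 2 * x by rewrite /cartan dotC -/x -/p mulfVK // gt_eqF.
have x_gt0 : 0 < x by nra.
have cab_gt0 : 0 < cartan a b by nra.
have cab_lt2 : cartan a b < 2.
  rewrite ltNge; apply/negP => cab_ge2.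
  have prod_ge4 : 4 <= cartan b a * cartan a b by nra.
  have : 4 * (p * q) <= (cartan b a * cartan a b) * (p * q).
    by rewrite ler_wpM2r // mulr_ge0 // ltW.
  have -> : (cartan b a * cartan a b) * (p * q) = 4 * x ^+ 2.
    by rewrite [p * q]mulrC mulrACA cba_q cab_p; ring.
  by rewrite ler_pM2l // leNgt cs.
have [z cab_z] := Phi_cartan_int bPhi aPhi.
have z1 : z = 1.
  rewrite cab_z in cab_gt0 cab_lt2; rewrite ltr0z in cab_gt0.
  have : (z < 2)%R by rewrite -(ltr_int R).
  by move: cab_gt0; clear; lia.
by have := PhiN (Phi_refl bPhi aPhi); rewrite reflE cab_z z1 scale1r opprB.
Qed.

Definition in_cone v := exists c : I -> R, (forall i, 0 <= c i) /\ v = \sum_i c i *: D i.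

Lemma coneD u v : in_cone u -> in_cone v -> in_cone (u + v).
Proof.
move=> [c [c_ge0 ->]] [d [d_ge0 ->]]; exists (fun i => c i + d i); split.
  by move=> i; rewrite addr_ge0.
by rewrite -big_split; apply: eq_bigr => i _; rewrite scalerDl.
Qed.

Lemma coneZ (t : R) v : 0 <= t -> in_cone v -> in_cone (t *: v).
Proof.
move=> t_ge0 [c [c_ge0 ->]]; exists (fun i => t * c i); split.
  by move=> i; rewrite mulr_ge0.
by rewrite scaler_sumr; apply: eq_bigr => i _; rewrite scalerA.
Qed.

Lemma cone_pos a : pos a -> in_cone a.
Proof. by move=> [_ [c ->]]; exists (fun i => (c i)%:R); split => // i; apply: ler0n. Qed.

Lemma cone_anti v : in_cone v -> in_cone (- v) -> v = 0.
Proof.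
move=> [c [c_ge0 v_eq]] [d [d_ge0 Nv_eq]].
have cd_eq0 : \sum_i (c i + d i) *: D i = 0.
  by under eq_bigr do rewrite scalerDl; rewrite big_split /= -v_eq -Nv_eq subrr.
rewrite v_eq big1 // => i _.
have /eqP := Delta_free cd_eq0 i; rewrite paddr_eq0 // => /andP [/eqP -> _].
by rewrite scale0r.
Qed.

Lemma pos_Phi a : pos a -> a \in Phi. Proof. by case. Qed.

Lemma pos_not_neg a : pos a -> ~ neg a.
Proof.
move=> a_pos a_neg; have := cone_anti (cone_pos a_pos) (cone_pos a_neg).
by apply/eqP; apply: Phi_neq0; apply: pos_Phi.
Qed.

Lemma cone_Phi_pos a : a \in Phi -> in_cone a -> pos a.
Proof.
move=> aPhi a_cone; case: (Phi_pos_or_neg aPhi) => // a_neg.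
by move: (Phi_neq0 aPhi); rewrite (cone_anti a_cone (cone_pos a_neg)) eqxx.
Qed.

Lemma Delta_pos (i : I) : pos (D i).
Proof.
split; first exact: Delta_Phi.
exists (fun j => (j == i : nat)); rewrite -[LHS]scale1r -(sum_Delta_delta i 1).
by apply: eq_bigr => j _; case: (j == i).
Qed.

Definition srefl (i : I) : M := refl (D i).

(* A positive root other than [D i] has a positive coordinate outside [i],
   which [srefl i] does not change. *)
Lemma srefl_pos (i : I) a : pos a -> a != D i -> pos (srefl i *m a).
Proof.
move=> a_pos neq_a; have aPhi := pos_Phi a_pos.
have sa_Phi : srefl i *m a \in Phi by apply: Phi_refl => //; apply: Delta_Phi.
case: (Phi_pos_or_neg sa_Phi) => // -[_ [d d_eq]].
case: a_pos => _ [c c_eq]; exfalso; move/eqP: neq_a; apply.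
have cd_eq : \sum_j ((c j)%:R + (d j)%:R) *: D j =
             \sum_j (if j == i then cartan a (D i) else 0) *: D j.
  rewrite sum_Delta_delta; under eq_bigr do rewrite scalerDl.
  by rewrite big_split /= -c_eq -d_eq /srefl reflE opprB addrCA subrr addr0.
have c_supp j : j != i -> c j = 0%N.
  move=> neq_ji; have := Delta_coord_uniq cd_eq j; rewrite (negbTE neq_ji) => /eqP.
  by rewrite -natrD pnatr_eq0 addn_eq0 => /andP [/eqP].
have a_eq : a = (c i)%:R *: D i.
  by rewrite c_eq (bigD1 i) //= big1 ?addr0 // => j /c_supp ->; rewrite scale0r.
have [ci1|ciN1] : ((c i)%:R : R) = 1 \/ (c i)%:R = -1 :> R.
- by apply: Phi_reduced; [apply: Delta_Phi | move: aPhi; rewrite {1}a_eq].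
- by rewrite a_eq ci1 scale1r.
by have := ler0n R (c i); rewrite ciN1 oppr_ge0 ler10.
Qed.

Lemma srefl_neg (i : I) a : neg a -> a != - D i -> neg (srefl i *m a).
Proof.
move=> a_neg neq_a; rewrite /negative -mulmxN; apply: srefl_pos => //.
by apply: contra neq_a => /eqP <-; rewrite opprK.
Qed.

Lemma srefl_inversion (i : I) a : pos a -> neg (srefl i *m a) -> a = D i.
Proof.
move=> a_pos sa_neg; apply/eqP/negPn/negP => neq_a.
exact: pos_not_neg (srefl_pos a_pos neq_a) sa_neg.
Qed.

Notation wp := (@word_prod _ _ Delta).

Lemma word_prod_cat s t : wp (s ++ t) = wp s *m wp t.
Proof. by elim: s => [|i s IHs] /=; rewrite ?mul1mx // IHs mulmxA. Qed.

Lemma word_prod_rcons s i : wp (rcons s i) = wp s *m srefl i.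
Proof. by rewrite -cats1 word_prod_cat /= mulmx1. Qed.

Lemma srefl_mulmxK i : srefl i *m srefl i = 1%:M.
Proof. exact: refl_mulmxK (Delta_neq0 i). Qed.

Lemma trmx_word_prod s : (wp s)^T = wp (rev s).
Proof.
elim: s => [|i s IHs]; first by rewrite trmx1.
by rewrite /= trmx_mul IHs trmx_refl rev_cons word_prod_rcons.
Qed.

Lemma orthomx_word_prod s : orthomx (wp s).
Proof.
elim: s => [|i s IHs]; first by rewrite /orthomx trmx1 mulmx1.
exact: orthomxM (orthomx_refl (Delta_neq0 i)) IHs.
Qed.

Definition is_word x := exists s, wp s = x.

Lemma is_word_srefl i : is_word (srefl i).
Proof. by exists [:: i]; rewrite /= mulmx1. Qed.

Lemma is_word_tr x : is_word x -> is_word x^T.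
Proof. by case=> s <-; exists (rev s); rewrite trmx_word_prod. Qed.

Lemma is_wordM x y : is_word x -> is_word y -> is_word (x *m y).
Proof. by case=> s <- [t <-]; exists (s ++ t); rewrite word_prod_cat. Qed.

Lemma is_word_orthomx x : is_word x -> orthomx x.
Proof. by case=> s <-; apply: orthomx_word_prod. Qed.

Lemma is_word_Phi x a : is_word x -> a \in Phi -> x *m a \in Phi.
Proof.
case=> s <-; elim: s a => [|i s IHs] a aPhi /=; first by rewrite mul1mx.
by rewrite -mulmxA; apply: Phi_refl; [apply: Delta_Phi | apply: IHs].
Qed.

Lemma big_Phi_word (A : Type) (idx : A) (op : Monoid.com_law idx) (F : V -> A) x :
  is_word x -> \big[op/idx]_(a <- Phi) F (x *m a) = \big[op/idx]_(a <- Phi) F a.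
Proof.
move=> x_word; have ox := is_word_orthomx x_word.
apply: (big_bij_in _ _ (g := mulmx x^T) Phi_uniq) => a aPhi.
- exact: is_word_Phi.
- exact: is_word_Phi (is_word_tr x_word) aPhi.
- by rewrite mulmxA ox mul1mx.
- by rewrite mulmxA orthomxC // mul1mx.
Qed.

Lemma big_PhiN (A : Type) (idx : A) (op : Monoid.com_law idx) (F : V -> A) :
  \big[op/idx]_(a <- Phi) F (- a) = \big[op/idx]_(a <- Phi) F a.
Proof. by apply: (big_bij_in _ _ (g := -%R) Phi_uniq) => a ? /=; rewrite ?opprK ?PhiN. Qed.

Definition posb a : bool := `[< pos a >].

Lemma posbP a : reflect (pos a) (posb a). Proof. exact: asboolP. Qed.

Lemma posbN a : a \in Phi -> posb (- a) = ~~ posb a.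
Proof.
move=> aPhi; apply/idP/idP => [/posbP a_neg|/posbP a_pos].
  by apply/posbP => a_pos; apply: pos_not_neg a_pos a_neg.
by apply/posbP; case: (Phi_pos_or_neg aPhi).
Qed.

Lemma posb_Delta (i : I) : posb (D i). Proof. by apply/posbP; apply: Delta_pos. Qed.

Lemma Delta_neqN (i : I) : D i != - D i.
Proof.
by apply/eqP => eqN; have := posb_Delta i; rewrite {1}eqN posbN ?posb_Delta ?Delta_Phi.
Qed.

Lemma posb_srefl (i : I) a : a \in Phi -> a != D i -> a != - D i ->
  posb (srefl i *m a) = posb a.
Proof.
move=> aPhi neq_a neq_Na; have [/posbP a_pos|a_npos] := boolP (posb a).
  by apply/posbP; apply: srefl_pos.
have a_neg : neg a by case: (Phi_pos_or_neg aPhi) => // /posbP; rewrite (negbTE a_npos).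
apply/negbTE; rewrite -posbN; first by apply/posbP; apply: srefl_neg.
exact: is_word_Phi (is_word_srefl i) aPhi.
Qed.

Lemma posbN_word x a : is_word x -> a \in Phi -> posb (- (x *m a)) = ~~ posb (x *m a).
Proof. by move=> x_word aPhi; rewrite posbN // is_word_Phi. Qed.

Definition ninv x : nat := \sum_(a <- Phi) (posb a && posb (- (x *m a))).

(* [srefl i] permutes the positive roots other than [D i]. *)
Lemma ninv_mulmx_srefl x i : is_word x ->
  (ninv (x *m srefl i) + posb (- (x *m D i)) = ninv x + posb (x *m D i))%N.
Proof.
move=> x_word; rewrite /ninv.
under eq_bigr => a _ do rewrite -{1}[a](@reflK _ _ (D i) a (Delta_neq0 i)) -mulmxA.
rewrite (big_Phi_word addn (fun b => posb (srefl i *m b) && posb (- (x *m b)))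
           (is_word_srefl i)).
have delta (b : V) (k : nat) : b \in Phi -> (\sum_(a <- Phi) ((a == b) * k) = k)%N.
  by move=> bPhi; rewrite (big_uniq_delta addn Phi_uniq bPhi) ?eqxx ?mul1n // => a /negbTE ->.
rewrite -[in LHS](delta _ (posb (- (x *m D i))) (Delta_Phi i)).
rewrite -[in RHS](delta _ (posb (x *m D i)) (PhiN (Delta_Phi i))).
rewrite -!big_split /=; apply: eq_big_seq => a aPhi.
have [->|neq_a] := eqVneq a (D i).
  rewrite refl_self ?Delta_neq0 // posbN ?posb_Delta ?Delta_Phi //=.
  by rewrite (negbTE (Delta_neqN i)) add0n mul1n mul0n addn0.
have [->|neq_Na] := eqVneq a (- D i).
  rewrite mulmxN refl_self ?Delta_neq0 // opprK posb_Delta posbN ?posb_Delta ?Delta_Phi //=.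
  by rewrite mulmxN opprK.
by rewrite posb_srefl // !muln0 !addn0.
Qed.

Lemma ninv_mulmx_srefl_le x i : is_word x -> (ninv (x *m srefl i) <= (ninv x).+1)%N.
Proof.
move=> x_word; have := ninv_mulmx_srefl i x_word.
by rewrite posbN_word ?Delta_Phi //; case: (posb (x *m D i)) => /=; lia.
Qed.

Lemma word_exchange s (i : I) : neg (wp s *m D i) ->
  exists2 t, (size t < size s)%N & wp t = wp s *m srefl i.
Proof.
elim: s => [|j s IHs] /=; first by rewrite mul1mx => /(pos_not_neg (Delta_pos i)).
rewrite -mulmxA => sDi_neg.
have sDi_Phi : wp s *m D i \in Phi by apply: is_word_Phi; [exists s | apply: Delta_Phi].
have [sDi_pos|sDi_neg'] := Phi_pos_or_neg sDi_Phi; last first.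
  by have [t lt_ts eq_t] := IHs sDi_neg'; exists (j :: t); rewrite /= ?eq_t ?mulmxA.
exists s => //; have os := orthomx_word_prod s.
have := refl_conj (D i) os; rewrite (srefl_inversion sDi_pos sDi_neg) -/(srefl j) => <-.
by rewrite -!mulmxA (mulmxA _^T) os mul1mx srefl_mulmxK mulmx1.
Qed.

Lemma ninv_word_prod_le s : (ninv (wp s) <= size s)%N.
Proof.
elim/last_ind: s => [|s i IHs].
  rewrite /ninv big1_seq // => a /andP [_ aPhi].
  by rewrite mul1mx posbN //; case: (posb a).
rewrite word_prod_rcons size_rcons.
exact: leq_trans (ninv_mulmx_srefl_le i (ex_intro _ s erefl)) _.
Qed.

Lemma word_prod_shorten s : (ninv (wp s) < size s)%N ->
  exists2 t, (size t < size s)%N & wp t = wp s.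
Proof.
elim/last_ind: s => [|s i IHs] //; rewrite word_prod_rcons size_rcons => lt_ninv.
have [/IHs [t lt_ts <-]|ge_ninv] := ltnP (ninv (wp s)) (size s).
  by exists (rcons t i); rewrite ?word_prod_rcons ?size_rcons.
have s_word : is_word (wp s) by exists s.
have step := ninv_mulmx_srefl i s_word; rewrite posbN_word ?Delta_Phi // in step.
have le_ninv := ninv_word_prod_le s.
have [sDi_pos|sDi_npos] := boolP (posb (wp s *m D i)).
  by rewrite sDi_pos /= in step; lia.
have [|t lt_ts eq_t] := @word_exchange s i; last by exists t; [apply: ltnW | rewrite eq_t].
by apply/posbP; rewrite posbN_word ?Delta_Phi.
Qed.

Lemma length_is_ninv x : is_word x -> length_is Delta x (ninv x).
Proof.
move=> [s0 <-]; split => [|s <-]; last exact: ninv_word_prod_le.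
have [k] := ubnP (size s0); elim: k s0 => // k IHk s lt_sk.
have [/word_prod_shorten [t lt_ts <-]|ge_ninv] := ltnP (ninv (wp s)) (size s).
  by apply: IHk; apply: leq_trans lt_ts _.
by exists s; split => //; apply/eqP; rewrite eqn_leq ge_ninv ninv_word_prod_le.
Qed.

Lemma pos_dot_Delta_gt0 a : pos a -> exists i : I, 0 < dot a (D i).
Proof.
move=> [aPhi [c a_eq]]; apply/existsP; apply: contraTT (dot_gt0 (Phi_neq0 aPhi)).
rewrite negb_exists => /forallP dot_le0; rewrite -leNgt {1}a_eq dot_suml.
apply: sumr_le0 => j _; rewrite dotZl dotC mulr_ge0_le0 //.
by rewrite leNgt dot_le0.
Qed.

(* Induction on the height of [a]: if [<a, D i> > 0] and [a <> D i], then
   [srefl i a] is a positive root of smaller height. *)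
Lemma pos_word_Delta a : pos a -> exists t (j : I), a = wp t *m D j.
Proof.
move=> a_pos; have [aPhi [c a_eq]] := a_pos.
have [h] := ubnP (\sum_j c j)%N; elim: h a a_pos aPhi c a_eq => // h IHh a a_pos aPhi c a_eq.
rewrite ltnS => height_le.
have [i dot_aDi_gt0] := pos_dot_Delta_gt0 a_pos.
have [->|neq_a] := eqVneq a (D i); first by exists [::], i; rewrite mul1mx.
have sa_pos := srefl_pos a_pos neq_a; have [saPhi [c' sa_eq]] := sa_pos.
set k := cartan a (D i).
have k_gt0 : 0 < k by rewrite /k /cartan divr_gt0 ?mulr_gt0 ?dot_gt0 ?Delta_neq0.
have coord_eq : \sum_j ((c' j)%:R : R) *: D j =
                \sum_j ((c j)%:R - (if j == i then k else 0)) *: D j.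
  under [RHS]eq_bigr do rewrite scalerBl.
  by rewrite sumrB -a_eq sum_Delta_delta -sa_eq /srefl reflE.
have height_eq : ((\sum_j c' j)%:R : R) = (\sum_j c j)%:R - k.
  rewrite !natr_sum (eq_bigr _ (fun j _ => Delta_coord_uniq coord_eq j)) sumrB.
  by congr (_ - _); rewrite (bigD1 i) //= eqxx big1 ?addr0 // => j /negbTE ->.
have lt_height : (\sum_j c' j < h)%N.
  by apply: leq_trans height_le; rewrite -(ltr_nat R) height_eq; lra.
have [t [j sa_word]] := IHh _ sa_pos saPhi c' sa_eq lt_height.
by exists (i :: t), j; rewrite /= -mulmxA -sa_word reflK ?Delta_neq0.
Qed.

Lemma is_word_refl a : a \in Phi -> is_word (refl a).
Proof.
have pos_word b : pos b -> is_word (refl b).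
  move=> /pos_word_Delta [t [j ->]]; rewrite -refl_conj; last exact: orthomx_word_prod.
  rewrite trmx_word_prod; apply: is_wordM; last by exists (rev t).
  by apply: is_wordM; [exists t | apply: is_word_srefl].
move=> aPhi; case: (Phi_pos_or_neg aPhi) => [|a_neg]; first exact: pos_word.
by rewrite -reflN; apply: pos_word.
Qed.

Lemma in_W_is_word x : in_W Phi x -> is_word x.
Proof.
case=> s [sPhi ->]; elim: s sPhi => [|a s IHs] sPhi /=; first by exists [::].
apply: is_wordM; first by apply/is_word_refl/sPhi; rewrite mem_head.
by apply: IHs => b sb; apply: sPhi; rewrite in_cons sb orbT.
Qed.

(* [a |-> - x a] is a bijection between the inversions of [x^T] and of [x]. *)
Lemma ninv_tr x : is_word x -> ninv x^T = ninv x.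
Proof.
move=> x_word; have ox := is_word_orthomx x_word; have oxC := orthomxC ox.
rewrite /ninv -(@big_bij_in _ _ _ addn _ (fun a => posb a && posb (- (x^T *m a)))
   (fun a => - (x *m a)) (fun a => - (x^T *m a)) Phi_uniq).
- by apply: eq_bigr => a _; rewrite mulmxN opprK mulmxA ox mul1mx andbC.
- by move=> a aPhi; apply/PhiN/is_word_Phi.
- by move=> a aPhi; apply/PhiN/is_word_Phi => //; apply: is_word_tr.
- by move=> a _; rewrite mulmxN opprK mulmxA ox mul1mx.
- by move=> a _; rewrite mulmxN opprK mulmxA oxC mul1mx.
Qed.

Lemma sum_Phi_pos (F : V -> R) :
  \sum_(c <- Phi) F c = \sum_(c <- Phi) (posb c)%:R * (F c + F (- c)).
Proof.
rewrite (eq_big_seq (fun c => (posb c)%:R * F c + (posb (- c))%:R * F c)); last first.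
  by move=> c cPhi; rewrite posbN //; case: (posb c); rewrite /= ?mul0r ?mul1r ?addr0 ?add0r.
rewrite big_split /= -(big_PhiN +%R (fun c => (posb (- c))%:R * F c)) -big_split /=.
by apply: eq_bigr => c _; rewrite opprK mulrDr.
Qed.

Lemma sum_Phi_odd (sigma : V -> V) (F : V -> R) :
  {in Phi, forall a, sigma a \in Phi} -> {in Phi, involutive sigma} ->
  {in Phi, forall a, F (sigma a) = - F a} -> \sum_(c <- Phi) F c = 0.
Proof.
move=> sigmaPhi sigmaK F_odd.
have := big_bij_in +%R F Phi_uniq sigmaPhi sigmaPhi sigmaK sigmaK.
by rewrite (eq_big_seq (fun c => - F c)) ?sumrN; [lra | move=> c /F_odd].
Qed.

Lemma refl_neg_cartan_gt0 b c : pos b -> pos c -> neg (refl b *m c) -> 0 < cartan c b.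
Proof.
move=> b_pos c_pos sc_neg; rewrite ltNge; apply/negP => cartan_le0.
apply: pos_not_neg sc_neg; apply: cone_Phi_pos.
  by apply: Phi_refl; apply: pos_Phi.
rewrite reflE -scaleNr; apply: coneD; first exact: cone_pos.
by apply: coneZ; [rewrite oppr_ge0 | apply: cone_pos].
Qed.

Section MaximalInversion.
Variables (w : M) (g : V).
Hypothesis w_word : is_word w.
Hypothesis g_maxinv : maxinv Phi Delta w g.
Notation sg := (refl g).

Lemma invmx_word : invmx w = w^T.
Proof. exact/orthomx_invmx/is_word_orthomx. Qed.

Lemma maxinv_pos : pos g. Proof. by case: g_maxinv => -[]. Qed.
Lemma maxinv_Phi : g \in Phi. Proof. exact: pos_Phi maxinv_pos. Qed.
Lemma maxinv_neq0 : g != 0. Proof. exact: Phi_neq0 maxinv_Phi. Qed.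
Lemma maxinv_neg : neg (w^T *m g). Proof. by case: g_maxinv => -[_]; rewrite invmx_word. Qed.

Lemma maxinv_refl_Phi c : c \in Phi -> sg *m c \in Phi.
Proof. exact: Phi_refl maxinv_Phi. Qed.

Lemma maxinv_reflK c : sg *m (sg *m c) = c. Proof. exact: reflK maxinv_neq0. Qed.

Lemma maxinv_maximal e l : pos e -> neg (w^T *m e) -> e != g ->
  (forall b, b \in l -> pos b) -> e - g = \sum_(b <- l) b -> False.
Proof.
move=> e_pos we_neg neq_e l_pos e_eq; case: g_maxinv => _; apply; exists e; split.
- by split; rewrite ?invmx_word.
- exact/eqP.
- by exists l.
Qed.

(* For positive [c], this is [c \in inv(w)], as [w^T = w^-1]. *)
Definition inversion c := posb (- (w^T *m c)).

Lemma inversionP c : reflect (neg (w^T *m c)) (inversion c). Proof. exact: posbP. Qed.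

Lemma inversion_g : inversion g. Proof. exact/inversionP/maxinv_neg. Qed.

Lemma inversionN c : c \in Phi -> inversion (- c) = ~~ inversion c.
Proof.
by move=> cPhi; rewrite /inversion mulmxN opprK posbN_word ?negbK //; apply: is_word_tr.
Qed.

Lemma posb_trmx c : c \in Phi -> posb (w^T *m c) = ~~ inversion c.
Proof. by move=> cPhi; rewrite /inversion posbN_word ?negbK //; apply: is_word_tr. Qed.

Lemma cone_inversion c : c \in Phi -> in_cone (- (w^T *m c)) -> inversion c.
Proof.
move=> cPhi wc_cone; apply/inversionP/cone_Phi_pos => //.
by apply/PhiN/is_word_Phi => //; apply: is_word_tr.
Qed.

(* Write [<c, g^vee> = m + 1]; then [c - g = s_g c + m g] is a sum of positive
   roots, so [c] is no inversion by maximality of [g], and neither is [s_g c]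
   since [w^-1 c = w^-1 (s_g c) + <c, g^vee> w^-1 g]. *)
Lemma refl_pos_noninversion c : pos c -> pos (sg *m c) -> c != g -> 0 < cartan c g ->
  ~~ inversion c /\ ~~ inversion (sg *m c).
Proof.
move=> c_pos sc_pos neq_c k_gt0.
have [z k_eq] := Phi_cartan_int maxinv_Phi (pos_Phi c_pos).
have [m k_eqS] : exists m : nat, cartan c g = m.+1%:R.
  move: k_gt0; rewrite k_eq ltr0z; case: z {k_eq} => [[|m]|m] //= _.
  by exists m.
have c_noninv : ~~ inversion c.
  apply/negP => /inversionP wc_neg.
  apply: (maxinv_maximal c_pos wc_neg neq_c (l := sg *m c :: nseq m g)).
    by move=> b; rewrite in_cons => /orP [/eqP -> //|/nseqP [-> _]]; apply: maxinv_pos.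
  rewrite big_cons big_nseq iter_addr addr0 reflE k_eqS scaler_nat mulrS.
  by rewrite opprD addrA subrK.
split => //; apply: contra c_noninv => /inversionP wsc_neg.
apply: cone_inversion; first exact: pos_Phi.
have -> : - (w^T *m c) = - (w^T *m (sg *m c)) + cartan c g *: (- (w^T *m g)).
  by rewrite reflE mulmxBr -scalemxAr scalerN opprB addrAC subrr add0r.
apply: coneD; first exact: cone_pos.
by apply: coneZ; [apply: ltW | apply/cone_pos/maxinv_neg].
Qed.

(* [w^-1 c + w^-1 (- s_g c) = <c, g^vee> w^-1 g] is negative. *)
Lemma refl_neg_inversion c : pos c -> neg (sg *m c) ->
  inversion c || inversion (- (sg *m c)).
Proof.
move=> c_pos sc_neg; have k_gt0 := refl_neg_cartan_gt0 maxinv_pos c_pos sc_neg.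
have cPhi := pos_Phi c_pos; have tPhi : - (sg *m c) \in Phi by apply: pos_Phi.
rewrite -[inversion c]negbK -[inversion (- _)]negbK -!posb_trmx // -negb_and.
apply/negP => /andP [/posbP wc_pos /posbP wt_pos].
have wsum : w^T *m c + w^T *m (- (sg *m c)) = cartan c g *: (w^T *m g).
  by rewrite -mulmxDr reflE opprB addrCA subrr addr0 scalemxAr.
have /eqP : cartan c g *: (w^T *m g) = 0.
  apply: cone_anti; first by rewrite -wsum; apply: coneD; apply: cone_pos.
  by rewrite -scalerN; apply: coneZ; [apply: ltW | apply/cone_pos/maxinv_neg].
rewrite scaler_eq0 (gt_eqF k_gt0) /=; apply/negP.
by apply/Phi_neq0/is_word_Phi; [apply: is_word_tr | apply: maxinv_Phi].
Qed.

(* If [<c, g^vee> >= 2] then [c - g] and [- s_g c - g] are roots, which by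
   maximality of [g] must both be negative; but they sum to
   [(<c, g^vee> - 2) g], which is nonnegative. *)
Lemma refl_neg_inversion_cartan c : pos c -> c != g -> neg (sg *m c) ->
  inversion c -> inversion (- (sg *m c)) -> cartan c g = 1.
Proof.
move=> c_pos neq_c sc_neg c_inv t_inv.
have k_gt0 := refl_neg_cartan_gt0 maxinv_pos c_pos sc_neg.
have [z k_eq] := Phi_cartan_int maxinv_Phi (pos_Phi c_pos).
have [z1|neq_z1] := eqVneq z 1; first by rewrite k_eq z1.
have k_ge2 : 2 <= cartan c g.
  have : (2 <= z)%R by move: k_gt0 neq_z1; rewrite k_eq ltr0z; clear; lia.
  by rewrite k_eq -(ler_int R).
exfalso; set t := - (sg *m c).
have neq_cNg : c != - g.
  by apply/eqP => c_eq; apply: (pos_not_neg maxinv_pos); rewrite /negative -c_eq.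
have neq_t : t != g.
  by apply: contra neq_c => /eqP t_eq; rewrite -[c]maxinv_reflK -[_ *m c]opprK -/t t_eq
    mulmxN refl_self ?maxinv_neq0 ?opprK.
have neq_tNg : t != - g.
  by apply/eqP => t_eq; apply: (pos_not_neg maxinv_pos); rewrite /negative -t_eq.
have kt : cartan t g = cartan c g by rewrite cartanNl cartan_refll ?opprK ?maxinv_neq0.
have cgPhi := Phi_subr maxinv_Phi (pos_Phi c_pos) neq_c neq_cNg k_ge2.
have tgPhi : t - g \in Phi by apply: Phi_subr; rewrite ?kt ?maxinv_Phi //; apply: pos_Phi.
have [cg_pos|cg_neg] := Phi_pos_or_neg cgPhi.
  apply: (maxinv_maximal c_pos (elimT (inversionP _) c_inv) neq_c (l := [:: c - g])).
  - by move=> b; rewrite inE => /eqP ->.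
  - by rewrite big_seq1.
have [tg_pos|tg_neg] := Phi_pos_or_neg tgPhi.
  apply: (maxinv_maximal sc_neg (elimT (inversionP _) t_inv) neq_t (l := [:: t - g])).
  - by move=> b; rewrite inE => /eqP ->.
  - by rewrite big_seq1.
have sum_eq : (c - g) + (t - g) = (cartan c g - 2) *: g.
  by rewrite /t reflE; apply/matrixP => i j; rewrite !mxE; ring.
have /eqP : (c - g) + (t - g) = 0.
  apply: cone_anti; last by rewrite opprD; apply: coneD; apply: cone_pos.
  by rewrite sum_eq; apply: coneZ; [lra | apply/cone_pos/maxinv_pos].
rewrite addr_eq0 => /eqP cg_eq.
have /eqP : - (c - g) = 0.
  by apply: cone_anti (cone_pos cg_neg) _; rewrite opprK cg_eq; apply: cone_pos.
by rewrite oppr_eq0 subr_eq0 (negbTE neq_c).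
Qed.

Definition inv_sign c : R := 2 * (inversion c)%:R - 1.

(* Reindex [2 rho] by [w] and pair [c] with [- c]. *)
Lemma cartan_two_rho : cartan (two_rho Phi Delta) (- (w^T *m g)) =
  \sum_(c <- Phi) (posb c)%:R * (inv_sign c * cartan c g).
Proof.
have ow := is_word_orthomx w_word.
have norm_eq : dot (- (w^T *m g)) (- (w^T *m g)) = dot g g.
  by rewrite dotNl dotNr opprK orthomx_dot //; apply: orthomx_tr.
suff dot_eq : dot (two_rho Phi Delta) (- (w^T *m g)) =
    \sum_(c <- Phi) (posb c)%:R * (inv_sign c * dot c g).
  rewrite /cartan dot_eq norm_eq mulr_sumr mulr_suml; apply: eq_bigr => c _.
  by rewrite /cartan; ring.
rewrite /two_rho dot_suml big_mkcond /=.
rewrite (eq_bigr (fun c => (posb c)%:R * - dot (w *m c) g)); last first.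
  move=> c _; rewrite -/(posb c); case: (posb c); rewrite ?mul1r ?mul0r //.
  by rewrite dotNr (dotC c) dot_mulmxl trmxK (dotC g).
rewrite -(big_Phi_word +%R (fun c => (posb c)%:R * - dot (w *m c) g) (is_word_tr w_word)).
rewrite sum_Phi_pos; apply: eq_big_seq => c cPhi.
rewrite !mulmxN !mulmxA orthomxC // !mul1mx dotNl opprK posb_trmx // -/(inversion c).
by rewrite /inv_sign; case: (inversion c) => /=; ring.
Qed.

(* The summand of [ninv (w^T s_g) + <2 rho, b^vee> - ninv w^T] at [c]. *)
Definition count_term c : R := (posb (sg *m c) && inversion c)%:R +
  (posb c)%:R * (inv_sign c * cartan c g) - (posb c && inversion c)%:R.

(* Grouping [c] with [- c], the summands become [[c == g]] plus the following
   two terms, which are odd under [c |-> s_g c] and [c |-> - s_g c]. *)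
Definition refl_pos_term c : R :=
  (posb c && posb (sg *m c) && (c != g))%:R * (inv_sign c * cartan c g).

Definition refl_neg_term c : R :=
  (posb c && ~~ posb (sg *m c) && (c != g))%:R * (inv_sign c * (cartan c g - 1)).

Lemma posb_Nrefl c : c \in Phi -> posb (- (sg *m c)) = ~~ posb (sg *m c).
Proof. by move=> cPhi; rewrite posbN ?maxinv_refl_Phi. Qed.

Lemma posb_maxinv : posb g. Proof. exact/posbP/maxinv_pos. Qed.

Lemma posb_Nmaxinv : posb (- g) = false.
Proof. by rewrite posbN ?maxinv_Phi ?posb_maxinv. Qed.

Lemma count_term_pair c : c \in Phi ->
  (posb c)%:R * (count_term c + count_term (- c)) =
  (c == g)%:R + refl_pos_term c + refl_neg_term c.
Proof.
move=> cPhi; rewrite /count_term /refl_pos_term /refl_neg_term.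
have [c_pos|c_npos] := boolP (posb c); last first.
  have -> : (c == g) = false by apply: contraNF c_npos => /eqP ->; apply: posb_maxinv.
  by rewrite /= !mul0r !addr0.
rewrite posbN // c_pos mulmxN posb_Nrefl // inversionN //=.
have [->|neq_c] := eqVneq c g.
  rewrite refl_self ?maxinv_neq0 // posb_Nmaxinv cartan_self ?maxinv_neq0 //=.
  by rewrite /inv_sign inversion_g /=; ring.
by rewrite /inv_sign; case: (posb (sg *m c)); case: (inversion c) => /=; ring.
Qed.

Lemma refl_pos_term_odd c : c \in Phi -> refl_pos_term (sg *m c) = - refl_pos_term c.
Proof.
move=> cPhi; rewrite /refl_pos_term maxinv_reflK cartan_refll ?maxinv_neq0 //.
have [/andP [c_pos sc_pos]|] := boolP (posb c && posb (sg *m c)); last first.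
  by rewrite [posb (sg *m c) && _]andbC => /negbTE ->; rewrite /= !mul0r oppr0.
have neq_c : c != g by apply: contraTneq sc_pos => ->; rewrite refl_self ?maxinv_neq0 ?posb_Nmaxinv.
have neq_sc : sg *m c != g.
  by apply: contraTneq c_pos => sc_eq; rewrite -[c]maxinv_reflK sc_eq refl_self ?maxinv_neq0 ?posb_Nmaxinv.
rewrite c_pos sc_pos neq_c neq_sc /= /inv_sign.
move/posbP: c_pos => c_pos; move/posbP: sc_pos => sc_pos.
have [k_gt0|k_lt0|->] := ltrgt0P (cartan c g); last by ring.
  have [/negbTE-> /negbTE->] := refl_pos_noninversion c_pos sc_pos neq_c k_gt0.
  by rewrite /=; ring.
have ssc_pos : pos (sg *m (sg *m c)) by rewrite maxinv_reflK.
have sk_gt0 : 0 < cartan (sg *m c) g by rewrite cartan_refll ?maxinv_neq0 // oppr_gt0.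
have [/negbTE->] := refl_pos_noninversion sc_pos ssc_pos neq_sc sk_gt0.
by rewrite maxinv_reflK => /negbTE->; rewrite /=; ring.
Qed.

Lemma refl_neg_term_odd c : c \in Phi -> refl_neg_term (- (sg *m c)) = - refl_neg_term c.
Proof.
move=> cPhi; rewrite /refl_neg_term cartanNl cartan_refll ?maxinv_neq0 // opprK.
rewrite mulmxN maxinv_reflK (posbN cPhi) (posb_Nrefl cPhi) negbK.
have [/andP [/andP [c_pos sc_npos] neq_c]|] := boolP (posb c && ~~ posb (sg *m c) && (c != g)).
  have sc_neg : neg (sg *m c).
    by case: (Phi_pos_or_neg (maxinv_refl_Phi cPhi)) => // /posbP; rewrite (negbTE sc_npos).
  have neq_t : - (sg *m c) != g.
    apply: contra neq_c => /eqP t_eq.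
    by rewrite -[c]maxinv_reflK -[_ *m c]opprK t_eq mulmxN refl_self ?maxinv_neq0 ?opprK.
  rewrite c_pos sc_npos neq_t /= /inv_sign.
  move/posbP: c_pos => c_pos; have := refl_neg_inversion c_pos sc_neg.
  case: (boolP (inversion c)) => c_inv; case: (boolP (inversion (- (sg *m c)))) => t_inv //= _.
  - by rewrite (refl_neg_inversion_cartan c_pos neq_c sc_neg c_inv t_inv); ring.
  - by ring.
  - by ring.
rewrite mul0r oppr0; have [c_pos|] := boolP (posb c); last by rewrite andbF /= mul0r.
have [sc_pos|sc_npos] := boolP (posb (sg *m c)); first by rewrite /= mul0r.
rewrite /= negbK => /eqP ->.
by rewrite refl_self ?maxinv_neq0 // opprK eqxx /= mul0r.
Qed.

Lemma sum_count_term : \sum_(c <- Phi) count_term c = 1.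
Proof.
rewrite sum_Phi_pos (eq_big_seq _ count_term_pair) !big_split /=.
rewrite (big_uniq_delta +%R Phi_uniq maxinv_Phi) ?eqxx; last by move=> a /negbTE ->.
rewrite (sum_Phi_odd maxinv_refl_Phi (fun c _ => maxinv_reflK c) refl_pos_term_odd).
rewrite (sum_Phi_odd (sigma := fun c => - (sg *m c)) _ _ refl_neg_term_odd) ?addr0 //.
  by move=> c cPhi; apply/PhiN/maxinv_refl_Phi.
by move=> c _; rewrite mulmxN maxinv_reflK opprK.
Qed.

Lemma ninv_maxinv_refl :
  (ninv (w^T *m sg))%:R + cartan (two_rho Phi Delta) (- (w^T *m g)) = (ninv w^T)%:R + 1 :> R.
Proof.
have ninv_wsg : (ninv (w^T *m sg))%:R = \sum_(c <- Phi) ((posb (sg *m c) && inversion c)%:R : R).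
  rewrite /ninv natr_sum -(big_bij_in +%R _ Phi_uniq maxinv_refl_Phi maxinv_refl_Phi
    (fun c _ => maxinv_reflK c) (fun c _ => maxinv_reflK c)).
  by apply: eq_bigr => c _; rewrite -mulmxA maxinv_reflK.
rewrite cartan_two_rho ninv_wsg /ninv natr_sum.
have := sum_count_term; rewrite /count_term sumrB big_split /=.
rewrite -/(inversion _); lra.
Qed.

Lemma ninv_maxinv_mulmx_refl : let b := - (w^T *m g) in
  (ninv (w *m refl b))%:R = (ninv w)%:R + 1 - cartan (two_rho Phi Delta) b :> R.
Proof.
move=> b; have sgw_word : is_word (sg *m w) by apply: is_wordM => //; apply: is_word_refl maxinv_Phi.
rewrite reflN -refl_mulmx_orthomx; last exact: is_word_orthomx.
rewrite -(ninv_tr sgw_word) -(ninv_tr w_word) trmx_mul trmx_refl.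
by rewrite -ninv_maxinv_refl; ring.
Qed.

End MaximalInversion.
End RootSystem.

Theorem lemma3p11 (R : realFieldType) (n : nat) (Phi Delta : seq 'cV[R]_n)
    (w : 'M[R]_n) (g : 'cV[R]_n) :
  is_root_system Phi -> is_basis Phi Delta -> in_W Phi w ->
  maxinv Phi Delta w g ->
  let b := - (invmx w *m g) in
  [/\ positive Phi Delta b,
      refl g *m w = w *m refl b &
      exists l1 l2 : nat,
        [/\ length_is Delta w l1, length_is Delta (w *m refl b) l2 &
            (l2%:R : R) = l1%:R + 1 - cartan (two_rho Phi Delta) b]].
Proof.
move=> rootPhi basisDelta /(in_W_is_word rootPhi basisDelta) w_word g_maxinv.
rewrite (invmx_word rootPhi basisDelta w_word) => b.
have b_pos : positive Phi Delta b := maxinv_neg rootPhi basisDelta w_word g_maxinv.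
have ow := is_word_orthomx rootPhi basisDelta w_word.
have wb_word : is_word Delta (w *m refl b).
  exact: is_wordM w_word (is_word_refl rootPhi basisDelta (pos_Phi b_pos)).
split => //; first by rewrite reflN refl_mulmx_orthomx.
exists (ninv Phi Delta w), (ninv Phi Delta (w *m refl b)); split.
- exact: length_is_ninv.
- exact: length_is_ninv.
- exact: ninv_maxinv_mulmx_refl.
Qed.
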